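(* Consider finite games in which all players have the same nonnegative utility function $u$ with $\max_S u>0$, with the solution set being the set $\mathrm{NE}$ of pure Nash equilibria. For every such game, $\mathrm{PoS}=\mathrm{PoTS}=1$. On the other hand, for every $\varepsilon>0$ there is such a game with $\mathrm{PoA}<\varepsilon$, and for every $\delta>0$ there is such a game with $\mathrm{PoA}>0$ and $\mathrm{PoTA}\le\mathrm{PoSTA}\le\delta\cdot\mathrm{PoA}$.
   Context: $\mathrm{sw}(s)=\sum_iu_i(s)$. A transition of $\mathrm{NE}$ is a profile $t$ with $t_i=d_i$ for some $d\in\mathrm{NE}$, for every $i$; $T(\mathrm{NE})$ is the set of transitions. $\mathrm{BR}_i(s_{-i})$ is the set of best responses of $i$. A stable transition is $s\in T(\mathrm{NE})$ such that for every $i$ with $s_i\notin\mathrm{BR}_i(s_{-i})$ there is $j\neq i$ with $s_j\notin\mathrm{BR}_j(s_{-j})$ and some $\hat s_j\in\mathrm{BR}_j(s_{-j})$ with $s_i\in\mathrm{BR}_i(\hat s_j,s_{-\{i,j\}})$; $ST(\mathrm{NE})$ is the set of stable transitions. $\mathrm{PoA}=\min_{\mathrm{NE}}\mathrm{sw}/\max_S\mathrm{sw}$, $\mathrm{PoS}=\max_{\mathrm{NE}}\mathrm{sw}/\max_S\mathrm{sw}$, $\mathrm{PoTA}=\min_{T(\mathrm{NE})}\mathrm{sw}/\max_S\mathrm{sw}$, $\mathrm{PoTS}=\max_{T(\mathrm{NE})}\mathrm{sw}/\max_S\mathrm{sw}$, $\mathrm{PoSTA}=\min_{ST(\mathrm{NE})}\mathrm{sw}/\max_S\mathrm{sw}$.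 *)

From HB Require Import structures.
From mathcomp Require Import all_boot all_order all_algebra.
Unset Printing Implicit Defensive.
Import Order.TTheory GRing.Theory Num.Theory.
Local Open Scope ring_scope.

(* Minimum / maximum of a finite list of reals; the value on the empty list is
   an (irrelevant) junk value 0.  All lists to which these are applied below
   are nonempty in the games considered. *)
Definition seqmin {R : realFieldType} (l : seq R) : R := foldr Num.min (head 0 l) l.
Definition seqmax {R : realFieldType} (l : seq R) : R := foldr Num.max (head 0 l) l.

Section Game.
Variables (R : realFieldType) (n : nat) (S : 'I_n -> finType).

Definition profile := {dffun forall i : 'I_n, S i}.

Variable u : profile -> R.

Definition upd (s : profile) (i : 'I_n) (a : S i) : profile :=
  [ffun j => dfwith s a j].

Definition isBR (i : 'I_n) (s : profile) (a : S i) : bool :=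
  [forall b : S i, u (upd s i b) <= u (upd s i a)].

Definition isNE (s : profile) : bool := [forall i, isBR i s (s i)].

Definition sw (s : profile) : R := \sum_(i < n) u s.

Definition isTrans (t : profile) : bool :=
  [forall i, [exists d : profile, isNE d && (t i == d i)]].

Definition isStableTrans (s : profile) : bool :=
  isTrans s &&
  [forall i, ~~ isBR i s (s i) ==>
     [exists j, (j != i) && ~~ isBR j s (s j) &&
        [exists h : S j, isBR j s h && isBR i (upd s j h) (s i)]]].

Definition optsw : R := seqmax [seq sw s | s <- enum [pred s : profile | true]].

Definition PoA  : R := seqmin [seq sw s | s <- enum [pred s : profile | isNE s]] / optsw.
Definition PoS  : R := seqmax [seq sw s | s <- enum [pred s : profile | isNE s]] / optsw.
Definition PoTA : R := seqmin [seq sw s | s <- enum [pred s : profile | isTrans s]] / optsw.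
Definition PoTS : R := seqmax [seq sw s | s <- enum [pred s : profile | isTrans s]] / optsw.
Definition PoSTA : R := seqmin [seq sw s | s <- enum [pred s : profile | isStableTrans s]] / optsw.

End Game.

Arguments profile {n} S.
Arguments upd {n S} s i a.
Arguments isBR {R n S} u i s a.
Arguments isNE {R n S} u s.
Arguments sw {R n S} u s.
Arguments isTrans {R n S} u t.
Arguments isStableTrans {R n S} u s.
Arguments optsw {R n S} u.
Arguments PoA {R n S} u.
Arguments PoS {R n S} u.
Arguments PoTA {R n S} u.
Arguments PoTS {R n S} u.
Arguments PoSTA {R n S} u.

Definition admissible (R : realFieldType) (n : nat) (S : 'I_n -> finType)
  (u : profile S -> R) : Prop :=
  (0 < n)%N /\ (forall s, 0 <= u s) /\ (exists s, 0 < u s).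
Arguments admissible {R n S} u.

From HB Require Import structures.
From mathcomp Require Import all_boot all_order all_algebra.
Import Order.TTheory GRing.Theory Num.Theory.
Local Open Scope ring_scope.

(* A profile maximising the common utility is a Nash equilibrium, so the optimal
   welfare is attained in NE, which is contained in T(NE); hence PoS = PoTS = 1.
   In the two-player coordination game paying 1 on (true, true), c on
   (false, false) and 0 off the diagonal, with 0 < c <= 1, the equilibria are
   the two diagonal profiles, so PoA = c.  The profile (true, false) combines
   actions of the two equilibria and has welfare 0, yet it is a stable
   transition: once either player switches to its best response, the other
   player's action is a best reply again. *)

Section SeqExtrema.
Variable R : realFieldType.
Implicit Types (l : seq R) (x m : R).

Lemma seqmin_le l x : x \in l -> seqmin l <= x.
Proof. by move=> xl; rewrite /seqmin foldrE; exact: ge_bigmin_seq xl _. Qed.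

Lemma le_seqmax l x : x \in l -> x <= seqmax l.
Proof. by move=> xl; rewrite /seqmax foldrE; exact: le_bigmax_seq xl _. Qed.

Lemma seqmin_ge l m x : x \in l -> (forall y, y \in l -> m <= y) -> m <= seqmin l.
Proof.
case: l => // a l _ lb; rewrite /seqmin foldrE big_seq.
by apply: le_bigmin => [|y]; apply: lb; rewrite ?mem_head.
Qed.

Lemma seqmax_eq l x : x \in l -> (forall y, y \in l -> y <= x) -> seqmax l = x.
Proof.
case: l => // a l xl ub; apply: le_anti; rewrite le_seqmax // andbT.
by rewrite /seqmax foldrE big_seq; apply: bigmax_le => [|y]; apply: ub; rewrite ?mem_head.
Qed.

End SeqExtrema.

Section CommonPayoffGame.
Context {R : realFieldType} {n : nat} {S : 'I_n -> finType} (u : profile S -> R).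
Implicit Types s t : profile S.

Lemma upd_id s i : upd s i (s i) = s.
Proof. by apply/ffunP => j; rewrite ffunE; case: dfwithP. Qed.

Lemma swE s : sw u s = u s *+ n.
Proof. by rewrite /sw sumr_const card_ord. Qed.

Lemma isNE_isTrans s : isNE u s -> isTrans u s.
Proof. by move=> NEs; apply/forallP => i; apply/existsP; exists s; rewrite NEs eqxx. Qed.

Lemma maximizer_isNE [s] : (forall t, u t <= u s) -> isNE u s.
Proof. by move=> smax; apply/forallP => i; apply/forallP => b; rewrite upd_id. Qed.

Lemma exists_maximizer (s0 : profile S) : exists s, forall t, u t <= u s.
Proof. by case: (@arg_maxP _ _ _ s0 xpredT u isT) => s _ smax; exists s => t; exact: smax. Qed.

Lemma seqmax_sw_maximizer [s] (P : pred (profile S)) :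
  (forall t, u t <= u s) -> P s -> seqmax [seq sw u t | t <- enum P] = sw u s.
Proof.
move=> smax Ps; apply: seqmax_eq; first by rewrite map_f ?mem_enum.
by move=> _ /mapP[t _ ->]; rewrite !swE lerMn2r smax orbT.
Qed.

Hypothesis adm : admissible u.

Lemma optsw_gt0 : 0 < optsw u.
Proof.
case: adm => n_gt0 [_ [s0 us0_gt0]]; have [s smax] := exists_maximizer s0.
rewrite /optsw (seqmax_sw_maximizer _ smax) // swE pmulrn_lgt0 //.
exact: lt_le_trans us0_gt0 (smax s0).
Qed.

Lemma PoS_PoTS_eq1 : PoS u = 1 /\ PoTS u = 1.
Proof.
case: adm => _ [_ [s0 _]]; have [s smax] := exists_maximizer s0.
have NEs := maximizer_isNE smax.
have optE : optsw u = sw u s by exact: seqmax_sw_maximizer.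
rewrite /PoS /PoTS !(seqmax_sw_maximizer _ smax) //= ?isNE_isTrans // -optE.
by rewrite divff // gt_eqF // optsw_gt0.
Qed.

Lemma PoTA_le_PoSTA [s] : isStableTrans u s -> PoTA u <= PoSTA u.
Proof.
move=> STs; apply: ler_wpM2r; first by rewrite invr_ge0 ltW ?optsw_gt0.
apply: (@seqmin_ge _ _ _ (sw u s)) => [|y /mapP[t]]; first by rewrite map_f ?mem_enum.
by rewrite mem_enum => /andP[Tt _] ->; rewrite seqmin_le // map_f ?mem_enum.
Qed.

End CommonPayoffGame.

Definition Sbool (n : nat) : 'I_n -> finType := fun=> bool.

Lemma isBR_bool (R : realFieldType) n (u : profile (Sbool n) -> R) i s (x : bool) :
  isBR u i s x = (u (upd s i (~~ x)) <= u (upd s i x)).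
Proof.
apply/forallP/idP => [/(_ (~~ x)) // | dev y].
by case: x y dev => -[] // _; rewrite lexx.
Qed.

Definition profile2 (a b : bool) : profile (Sbool 2) :=
  [ffun i => if i == ord0 then a else b].

Lemma ord2P (i : 'I_2) : i = ord0 \/ i = ord_max.
Proof. by case: i => -[|[|//]] lti; [left | right]; apply: val_inj. Qed.

Lemma profile2_eta (s : profile (Sbool 2)) : s = profile2 (s ord0) (s ord_max).
Proof. by apply/ffunP => i; rewrite ffunE; case: (ord2P i) => ->. Qed.

Lemma upd_profile2_ord0 a b x : upd (profile2 a b) ord0 x = profile2 x b.
Proof. by apply/ffunP => i; case: (ord2P i) => ->; rewrite !ffunE ?dfwith_in ?dfwith_out ?ffunE. Qed.

Lemma upd_profile2_ord_max a b x : upd (profile2 a b) ord_max x = profile2 a x.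
Proof. by apply/ffunP => i; case: (ord2P i) => ->; rewrite !ffunE ?dfwith_in ?dfwith_out ?ffunE. Qed.

Lemma isNE_profile2 (R : realFieldType) (u : profile (Sbool 2) -> R) a b :
  isNE u (profile2 a b) =
  (u (profile2 (~~ a) b) <= u (profile2 a b)) && (u (profile2 a (~~ b)) <= u (profile2 a b)).
Proof.
apply/forallP/andP => [NE | [dev0 dev1] i].
  by have := NE ord0; have := NE ord_max; rewrite !isBR_bool !ffunE /= !upd_profile2_ord0 !upd_profile2_ord_max => ->->.
by case: (ord2P i) => ->; rewrite isBR_bool !ffunE /= ?upd_profile2_ord0 ?upd_profile2_ord_max.
Qed.

Section CoordinationGame.
Context {R : realFieldType} (c : R).

Definition coord (s : profile (Sbool 2)) : R :=
  if s ord0 && s ord_max then 1 else if ~~ s ord0 && ~~ s ord_max then c else 0.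

Lemma coord_profile2 a b :
  coord (profile2 a b) = if a && b then 1 else if ~~ a && ~~ b then c else 0.
Proof. by rewrite /coord !ffunE. Qed.

Hypotheses (c_gt0 : 0 < c) (c_le1 : c <= 1).

Lemma coord_ge0 s : 0 <= coord s.
Proof.
by rewrite (profile2_eta s) coord_profile2; case: (s ord0) (s ord_max) => -[]; rewrite /= ?ler01 ?lexx ?ltW.
Qed.

Lemma coord_le1 s : coord s <= 1.
Proof.
by rewrite (profile2_eta s) coord_profile2; case: (s ord0) (s ord_max) => -[]; rewrite /= ?ler01 ?lexx.
Qed.

Lemma coord_admissible : admissible coord.
Proof. by split=> //; split; [exact: coord_ge0 | exists (profile2 true true); rewrite coord_profile2]. Qed.

Lemma coord_optsw : optsw coord = 2.
Proof.
by rewrite /optsw (@seqmax_sw_maximizer _ _ _ coord (profile2 true true)) // => [|t];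
  rewrite ?swE coord_profile2 ?coord_le1.
Qed.

Lemma coord_isNE_ge s : isNE coord s -> c <= coord s.
Proof.
rewrite (profile2_eta s) isNE_profile2 !coord_profile2.
by case: (s ord0) (s ord_max) => -[]; rewrite /= ?lexx ?ler10 ?andbF // leNgt c_gt0.
Qed.

Lemma coord_PoA : PoA coord = c.
Proof.
have NEff : isNE coord (profile2 false false) by rewrite isNE_profile2 !coord_profile2 /= ltW.
rewrite /PoA; suff -> : seqmin [seq sw coord s | s <- enum [pred s | isNE coord s]] = c *+ 2.
  by rewrite coord_optsw -[c *+ 2]mulr_natr mulfK ?pnatr_eq0.
have sw_FF : sw coord (profile2 false false) = c *+ 2 by rewrite swE coord_profile2.
have mem_FF : sw coord (profile2 false false) \in [seq sw coord s | s <- enum [pred s | isNE coord s]].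
  by rewrite map_f ?mem_enum.
apply: le_anti; rewrite -{1}sw_FF seqmin_le //=; apply: seqmin_ge mem_FF _ => y /mapP[t].
by rewrite mem_enum => /coord_isNE_ge le_ct ->; rewrite swE lerMn2r le_ct orbT.
Qed.

Lemma coord_isStableTrans : isStableTrans coord (profile2 true false).
Proof.
have NEtt : isNE coord (profile2 true true) by rewrite isNE_profile2 !coord_profile2 /= ler01.
have NEff : isNE coord (profile2 false false) by rewrite isNE_profile2 !coord_profile2 /= ltW.
apply/andP; split.
  apply/forallP => i; apply/existsP; case: (ord2P i) => ->.
  - by exists (profile2 true true); rewrite NEtt !ffunE.
  - by exists (profile2 false false); rewrite NEff !ffunE.
apply/forallP => i; apply/implyP => _; apply/existsP; case: (ord2P i) => ->.
- exists ord_max; rewrite !ffunE /= isBR_bool /= !upd_profile2_ord_max !coord_profile2 /= ler10 /=.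
  apply/existsP; exists true.
  by rewrite !isBR_bool /= !upd_profile2_ord_max !upd_profile2_ord0 !coord_profile2 /= ler01.
- exists ord0; rewrite !ffunE /= isBR_bool /= !upd_profile2_ord0 !coord_profile2 /= -ltNge c_gt0 /=.
  apply/existsP; exists false.
  by rewrite !isBR_bool /= !upd_profile2_ord0 !upd_profile2_ord_max !coord_profile2 /= ltW.
Qed.

Lemma coord_PoSTA_le0 : PoSTA coord <= 0.
Proof.
have sw_TF : sw coord (profile2 true false) = 0 by rewrite swE coord_profile2 mul0rn.
rewrite /PoSTA coord_optsw pmulr_lle0 ?invr_gt0 // -sw_TF seqmin_le //.
by rewrite map_f // mem_enum; exact: coord_isStableTrans.
Qed.

End CoordinationGame.

Theorem proposition3 (R : realFieldType) :
  (forall (n : nat) (S : 'I_n -> finType) (u : profile S -> R),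
      admissible u -> PoS u = 1 /\ PoTS u = 1) /\
  (forall eps : R, 0 < eps ->
      exists (n : nat) (S : 'I_n -> finType) (u : profile S -> R),
        admissible u /\ PoA u < eps) /\
  (forall delta : R, 0 < delta ->
      exists (n : nat) (S : 'I_n -> finType) (u : profile S -> R),
        admissible u /\ 0 < PoA u /\ PoTA u <= PoSTA u /\ PoSTA u <= delta * PoA u).
Proof.
split; first by move=> n S u; exact: PoS_PoTS_eq1.
split=> [eps eps_gt0 | delta delta_gt0].
- pose c := eps / (eps + 1).
  have eps1_gt0 : 0 < eps + 1 by rewrite addr_gt0.
  have c_gt0 : 0 < c by rewrite divr_gt0.
  have c_le1 : c <= 1 by rewrite ler_pdivrMr // mul1r lerDl.
  exists 2, (Sbool 2), (coord c); split; first exact: coord_admissible.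
  by rewrite coord_PoA // ltr_pdivrMr // mulrDr mulr1 ltrDr mulr_gt0.
- exists 2, (Sbool 2), (coord 1); split; first exact: coord_admissible ltr01.
  rewrite coord_PoA ?ltr01 // mulr1; split=> //; split.
  + exact (PoTA_le_PoSTA _ (coord_admissible 1 ltr01) (coord_isStableTrans 1 ltr01)).
  + exact: le_trans (coord_PoSTA_le0 1 ltr01 (lexx 1)) (ltW delta_gt0).
Qed.
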